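(* For every $f=\sum_{n\ge0}f_n\mathtt{x}^n\in\mathbb{K}[[\mathtt{x}]]$ and every $(\mu_{+},\sigma_{+})\in\mathbb{K}[[\mathtt{x}]]^{+}\times\mathfrak{M}^{+}$, the series $\sum_{n\ge0}f_n(\mu_{+},\sigma_{+})^{\rtimes n}$ converges in $\mathbb{K}[[\mathtt{x}]]\times\mathfrak{M}$.
   Context: $\mathbb{K}$ is a field of characteristic zero (discrete topology); $\mathbb{K}[[\mathtt{x}]]$ has the $(\mathtt{x})$-adic topology given by the order valuation $\nu$ ($\nu(0)=+\infty$); $\mathfrak{M}:=\mathtt{x}\mathbb{K}[[\mathtt{x}]]$ (subspace topology); $\mathbb{K}[[\mathtt{x}]]\times\mathfrak{M}$ carries the product topology and componentwise vector space structure. $\mathbb{K}[[\mathtt{x}]]^{+}:=\mathfrak{M}$ (series with zero constant term) and $\mathfrak{M}^{+}:=\{\sigma\in\mathfrak{M}:\nu(\sigma)>1\}$. For $g=\sum g_n\mathtt{x}^n$ and $\sigma\in\mathfrak{M}$, $g\circ\sigma:=\sum g_n\sigma^n$. Product: $(\mu_1,\sigma_1)\rtimes(\mu_2,\sigma_2):=((\mu_1\circ\sigma_2)\mu_2,\sigma_1\circ\sigma_2)$; $(\mu,\sigma)^{\rtimes0}:=(1,\mathtt{x})$ and $(\mu,\sigma)^{\rtimes n}$ is the $n$-fold $\rtimes$-product. *)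

From mathcomp Require Import all_boot all_algebra.
Set Implicit Arguments. Unset Strict Implicit. Unset Printing Implicit Defensive.
Import GRing.Theory.
Local Open Scope ring_scope.

(* Formal power series over K, represented by their coefficient sequences:
   a series g = \sum_n g_n x^n is the function n |-> g_n. *)
Definition fps (K : fieldType) := nat -> K.

Section FPS.
Variable K : fieldType.

Definition fps_one : fps K := fun n => if n == 0%N then 1 else 0.
Definition fps_x : fps K := fun n => if n == 1%N then 1 else 0.

Definition fps_mul (a b : fps K) : fps K :=
  fun n => \sum_(i < n.+1) a i * b (n - i)%N.

Fixpoint fps_exp (a : fps K) (n : nat) : fps K :=
  if n is m.+1 then fps_mul a (fps_exp a m) else fps_one.

Definition fps_ord_gt (a : fps K) (k : nat) : Prop :=
  forall j, (j <= k)%N -> a j = 0.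

(* Since sigma^n has
   order >= n, the coefficient of x^k only receives contributions from
   n <= k, so this is the x-adic limit written out coefficientwise. *)
Definition fps_comp (g s : fps K) : fps K :=
  fun k => \sum_(n < k.+1) g n * fps_exp s n k.

Definition rtimes (p q : fps K * fps K) : fps K * fps K :=
  (fps_mul (fps_comp p.1 q.2) q.1, fps_comp p.2 q.2).

Fixpoint rtimes_pow (p : fps K * fps K) (n : nat) : fps K * fps K :=
  if n is m.+1 then rtimes p (rtimes_pow p m) else (fps_one, fps_x).

Definition rtimes_partial (f : fps K) (p : fps K * fps K) (N : nat)
  : fps K * fps K :=
  (fun k => \sum_(n < N) f n * (rtimes_pow p n).1 k,
   fun k => \sum_(n < N) f n * (rtimes_pow p n).2 k).

(* Convergence in K[[x]] x K[[x]] with the product of the x-adic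
   topologies: for every k, eventually both components agree with the
   limit in all coefficients of index <= k. *)
Definition fps2_cvg (u : nat -> fps K * fps K) (l : fps K * fps K) : Prop :=
  forall k, exists N, forall M, (N <= M)%N ->
    fps_ord_gt (fun j => (u M).1 j - l.1 j) k /\
    fps_ord_gt (fun j => (u M).2 j - l.2 j) k.

End FPS.

From mathcomp Require Import all_boot all_algebra.
From mathcomp Require Import zify.
Set Implicit Arguments. Unset Strict Implicit. Unset Printing Implicit Defensive.
Local Open Scope ring_scope.
Import GRing.Theory.

(* Orders add under products and multiply under substitution, so the n-th
   semidirect power of (mu, sigma) with nu(mu) >= 1 and nu(sigma) >= 2 has
   components of order at least n and n + 1.  Hence the coefficient of x^k in
   the partial sums stops changing after k + 1 terms, which is x-adic
   convergence. *)

Section SeriesOrder.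
Variable K : fieldType.

Definition fps_ord_ge (a : fps K) (p : nat) : Prop :=
  forall j, (j < p)%N -> a j = 0.

Lemma fps_ord_geW (a : fps K) p q :
  (p <= q)%N -> fps_ord_ge a q -> fps_ord_ge a p.
Proof. by move=> lepq ha j ltjp; apply: ha; apply: leq_trans lepq. Qed.

Lemma fps_ord_ge_mul (a b : fps K) p q :
  fps_ord_ge a p -> fps_ord_ge b q -> fps_ord_ge (fps_mul a b) (p + q).
Proof.
move=> ha hb j ltj; rewrite /fps_mul big1 // => i _.
have [ltip|leip] := ltnP i p; first by rewrite ha // mul0r.
rewrite hb ?mulr0 //; have := ltn_ord i; lia.
Qed.

Lemma fps_ord_ge_exp (s : fps K) q n :
  fps_ord_ge s q -> fps_ord_ge (fps_exp s n) (q * n).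
Proof.
move=> hs; elim: n => [|n IHn] /=; first by move=> j; rewrite muln0.
by rewrite mulnS; apply: fps_ord_ge_mul.
Qed.

Lemma fps_ord_ge_comp (g s : fps K) p q :
  fps_ord_ge g p -> fps_ord_ge s q -> fps_ord_ge (fps_comp g s) (p * q).
Proof.
move=> hg hs k ltk; rewrite /fps_comp big1 // => n _.
have [ltnp|lepn] := ltnP n p; first by rewrite hg // mul0r.
rewrite (@fps_ord_ge_exp s q n hs) ?mulr0 //.
by apply: leq_trans ltk _; rewrite mulnC leq_mul2l lepn orbT.
Qed.

Lemma fps_ord_ge_rtimes_pow (mu sigma : fps K) n :
  fps_ord_ge mu 1 -> fps_ord_ge sigma 2 ->
  fps_ord_ge (rtimes_pow (mu, sigma) n).1 n /\
  fps_ord_ge (rtimes_pow (mu, sigma) n).2 n.+1.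
Proof.
move=> hmu hsigma; elim: n => [|n [IH1 IH2]].
  by split=> [j //|[|j] //].
split.
- by apply: fps_ord_geW _ (fps_ord_ge_mul (fps_ord_ge_comp hmu IH2) IH1); lia.
- by apply: fps_ord_geW _ (fps_ord_ge_comp hsigma IH2); lia.
Qed.

Lemma fps_partial_sum_coef_stable (c : fps K) (u : nat -> fps K) j M :
  (forall n, fps_ord_ge (u n) n) -> (j < M)%N ->
  \sum_(n < M) c n * u n j = \sum_(n < j.+1) c n * u n j.
Proof.
move=> hu ltjM; rewrite -(subnKC ltjM) big_split_ord /=.
rewrite [X in _ + X]big1 ?addr0 // => i _.
by rewrite hu ?mulr0 // ltnS leq_addr.
Qed.

End SeriesOrder.

Theorem mainTheorem9 (K : fieldType) (hK : [pchar K] =i pred0)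
  (f : fps K) (mu sigma : fps K)
  (hmu : mu 0%N = 0)
  (hsigma : fps_ord_gt sigma 1) :
  exists l : fps K * fps K,
    l.2 0%N = 0 /\ fps2_cvg (rtimes_partial f (mu, sigma)) l.
Proof.
have hmu1 : fps_ord_ge mu 1 by case.
have hsigma2 : fps_ord_ge sigma 2 by move=> j; apply: hsigma.
have ord1 n := (fps_ord_ge_rtimes_pow n hmu1 hsigma2).1.
have ord2 n := fps_ord_geW (leqnSn n) (fps_ord_ge_rtimes_pow n hmu1 hsigma2).2.
pose P := rtimes_partial f (mu, sigma).
exists (fun k => (P k.+1).1 k, fun k => (P k.+1).2 k); split.
  by rewrite /P /rtimes_partial /= big_ord1 /fps_x mulr0.
move=> k; exists k.+1 => M ltkM; split=> j lejk; rewrite /P /rtimes_partial /=;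
  have ltjM : (j < M)%N by apply: leq_ltn_trans ltkM.
- by rewrite (fps_partial_sum_coef_stable f ord1 ltjM) subrr.
- by rewrite (fps_partial_sum_coef_stable f ord2 ltjM) subrr.
Qed.
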